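(* Let $f:\mathbb{R}^n\to\mathbb{R}$ be a smooth convex function whose gradient is $L$-Lipschitz continuous, and let $h$ be either $h_{\text{b}}$ or $h_{\text{s}}$ (defined in the context). Consider the problem $\min_{\mathbf{x}\in\mathbb{R}^n} F(\mathbf{x})\triangleq f(\mathbf{x})+h(\mathbf{x})$. Then the following hierarchy of necessary optimality conditions holds: (1) every $L$-stationary point is a basic stationary point; (2) every block-$1$ stationary point is an $L$-stationary point; (3) for every $1\le k_2\le k_1\le n$, every block-$k_1$ stationary point is a block-$k_2$ stationary point (so block-$n$ $\Rightarrow\cdots\Rightarrow$ block-$2$ $\Rightarrow$ block-$1$); (4) a point is a block-$n$ stationary point if and only if it is a global optimal solution of $\min_{\mathbf{x}} F(\mathbf{x})$.
   Context: Here $h_{\text{b}}(\mathbf{x})\triangleq I_{\Psi}(\mathbf{x})$ with $\Psi=\{-1,1\}^n$, and $h_{\text{s}}(\mathbf{x})\triangleq\lambda\|\mathbf{x}\|_0+I_{\Omega}(\mathbf{x})$ with $\Omega=[-\rho\mathbf{1},\rho\mathbf{1}]$, where $\lambda,\rho>0$, $\|\mathbf{x}\|_0$ counts nonzero entries, and $I_S$ is the indicator function of $S$ ($0$ on $S$, $+\infty$ outside). Definitions: - Basic stationary point: $\breve{\mathbf{x}}$ such that, if $h=h_{\text{b}}$, $\breve{\mathbf{x}}\in\{-1,+1\}^n$; if $h=h_{\text{s}}$, $\breve{\mathbf{x}}_S=\arg\min_{\mathbf{z}\in[-\rho\mathbf{1},\rho\mathbf{1}]}\tfrac{L}{2}\|\mathbf{z}-(\breve{\mathbf{x}}-\nabla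 f(\breve{\mathbf{x}})/L)_S\|_2^2$ where $S=\{i:\breve{\mathbf{x}}_i\neq0\}$ and $\mathbf{v}_S$ denotes the subvector indexed by $S$. - $L$-stationary point: $\grave{\mathbf{x}}$ such that $\grave{\mathbf{x}}\in\arg\min_{\mathbf{x}}\, g(\mathbf{x},\grave{\mathbf{x}})+h(\mathbf{x})$, where $g(\mathbf{x},\mathbf{z})\triangleq f(\mathbf{z})+\langle\nabla f(\mathbf{z}),\mathbf{x}-\mathbf{z}\rangle+\tfrac{L}{2}\|\mathbf{x}-\mathbf{z}\|_2^2$. - Block-$k$ stationary point: $\bar{\mathbf{x}}$ such that for every $B\subseteq\{1,\dots,n\}$ with $|B|=k$ and $N=\{1,\dots,n\}\setminus B$, $\bar{\mathbf{x}}\in\arg\min_{\mathbf{z}\in\mathbb{R}^n}\{F(\mathbf{z}) : \mathbf{z}_N=\bar{\mathbf{x}}_N\}$. *)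

From HB Require Import structures.
From mathcomp Require Import all_boot all_order all_algebra.
From mathcomp Require Import all_classical all_reals all_analysis.
Set Implicit Arguments. Unset Strict Implicit. Unset Printing Implicit Defensive.
Import Order.TTheory GRing.Theory Num.Theory.
Import numFieldNormedType.Exports.
Local Open Scope ring_scope.

Section Defs.
Variables (R : realType) (n : nat).
Notation vec := 'rV[R]_n.

Definition dotv (u v : vec) : R := \sum_(i < n) u ord0 i * v ord0 i.
Definition sqnorm2 (v : vec) : R := \sum_(i < n) (v ord0 i) ^+ 2.
Definition norm2 (v : vec) : R := Num.sqrt (sqnorm2 v).

Definition has_gradient (f : vec -> R) (grad : vec -> vec) : Prop :=
  forall x, differentiable f x /\ forall v, 'd f x v = dotv (grad x) v.

Definition convex_fun (f : vec -> R) : Prop :=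
  forall x y (t : R), 0 <= t <= 1 ->
    f ((1 - t) *: x + t *: y) <= (1 - t) * f x + t * f y.

Definition lipschitz2 (g : vec -> vec) (L : R) : Prop :=
  forall x y, norm2 (g x - g y) <= L * norm2 (x - y).

Definition l0 (x : vec) : nat := #|[set i : 'I_n | x ord0 i != 0]|.

Definition in_box (rho : R) (x : vec) : bool :=
  [forall i : 'I_n, (- rho <= x ord0 i) && (x ord0 i <= rho)].

Definition in_binary (x : vec) : bool :=
  [forall i : 'I_n, (x ord0 i == 1) || (x ord0 i == -1)].

Definition h_b (x : vec) : \bar R := if in_binary x then 0%E else +oo%E.
Definition h_s (lam rho : R) (x : vec) : \bar R :=
  if in_box rho x then ((lam * (l0 x)%:R)%:E)%E else +oo%E.

Inductive hkind := HB | HS.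

Definition hfun (k : hkind) (lam rho : R) : vec -> \bar R :=
  match k with HB => h_b | HS => h_s lam rho end.

Definition is_argmin (T : Type) (phi : T -> \bar R) (x : T) : Prop :=
  (phi x < +oo)%E /\ forall z, (phi x <= phi z)%E.

Definition Fobj (f : vec -> R) (h : vec -> \bar R) (x : vec) : \bar R :=
  ((f x)%:E + h x)%E.

Definition gmaj (f : vec -> R) (grad : vec -> vec) (L : R) (x z : vec) : R :=
  f z + dotv (grad z) (x - z) + L / 2 * sqnorm2 (x - z).

Definition basic_stationary (k : hkind) (grad : vec -> vec) (L rho : R)
    (x : vec) : Prop :=
  match k with
  | HB => in_binary x
  | HS =>
      let w := x - L^-1 *: grad x in
      let S := [set i : 'I_n | x ord0 i != 0] in
      (forall i, i \in S -> - rho <= x ord0 i <= rho) /\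
      forall z : vec, (forall i, i \in S -> - rho <= z ord0 i <= rho) ->
        L / 2 * \sum_(i in S) (x ord0 i - w ord0 i) ^+ 2 <=
        L / 2 * \sum_(i in S) (z ord0 i - w ord0 i) ^+ 2
  end.

Definition L_stationary (f : vec -> R) (grad : vec -> vec) (L : R)
    (h : vec -> \bar R) (x : vec) : Prop :=
  is_argmin (fun y => ((gmaj f grad L y x)%:E + h y)%E) x.

Definition block_stationary (k : nat) (f : vec -> R) (h : vec -> \bar R)
    (x : vec) : Prop :=
  forall B : {set 'I_n}, #|B| = k ->
    is_argmin (fun z : {z : vec | forall i, i \notin B -> z ord0 i = x ord0 i}
                 => Fobj f h (sval z))
              (exist _ x (fun _ _ => erefl)).

End Defs.

From HB Require Import structures.
From mathcomp Require Import all_boot all_order all_algebra.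
From mathcomp Require Import all_classical all_reals all_analysis.
From mathcomp Require Import ring lra.
Set Implicit Arguments.
Unset Strict Implicit.
Unset Printing Implicit Defensive.
Import Order.TTheory GRing.Theory Num.Theory.
Import numFieldNormedType.Exports.
Local Open Scope ring_scope.

(* Both penalties are separable: on a product of intervals or of finite sets they
   are a sum of one-variable costs, and +oo outside it.  By the descent lemma,
   moving the single coordinate i of x to t changes f by at most
   grad_i(x) (t - x_i) + L/2 (t - x_i)^2, which is exactly the i-th summand of the
   majorant g(., x).  Hence optimality of x along every coordinate (block-1
   stationarity) gives one inequality per coordinate, and summing them is
   L-stationarity.  For h_s, compare x with the point that agrees with z on the
   support of x and vanishes elsewhere: its l0 penalty is at most that of x, so
   L-stationarity makes the linear-plus-quadratic part of the majorant
   nonnegative there, and after completing the square on the support this is the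
   proximal condition defining basic stationarity.  Block stationarity
   weakens as the block size drops because every small block lies in a larger
   one, and the only block of size n is everything. *)

Lemma descent_segment (R : realType) (phi dphi : R -> R) (K : R) :
  (forall t : R, is_derive t 1 phi (dphi t)) ->
  (forall t, 0 <= t <= 1 -> dphi t - dphi 0 <= K * t) ->
  phi 1 <= phi 0 + dphi 0 + K / 2.
Proof.
move=> Dphi dphi_le.
pose psi := phi - (dphi 0 \*: @id R) - (K / 2 \*: (@id R \* @id R)).
have psiE s : psi s = phi s - dphi 0 * s - K / 2 * (s * s) by [].
have Dpsi (t : R) : is_derive t 1 psi (dphi t - dphi 0 - K * t).
  apply: is_derive_eq; rewrite /= [(dphi 0)%:A]mulr1 [t%:A]mulr1.
  by rewrite [_ *: _]mulrDr -mulrDl -splitr.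
have psi_cont : {within `[0, 1], continuous psi}%classic.
  by apply: derivable_within_continuous => t _; exact: ex_derive.
have [t t01 psi10] := MVT_segment ler01 (fun t _ => Dpsi t) psi_cont.
move: t01; rewrite in_itv /= => /dphi_le dphi_t.
move: psi10; rewrite !psiE !mulr0 !mulr1 !subr0.
lra.
Qed.

Section Coordinates.
Variables (R : realType) (n : nat).
Implicit Types (x u v : 'rV[R]_n) (i : 'I_n) (f : 'rV[R]_n -> R)
  (grad : 'rV[R]_n -> 'rV[R]_n).

Lemma dotv_delta u i (d : R) : dotv u (d *: delta_mx ord0 i) = u ord0 i * d.
Proof.
rewrite /dotv (bigD1 i) //= big1 => [|j ji]; rewrite !mxE ?eqxx ?(negbTE ji) /=.
  by rewrite mulr1 addr0.
by rewrite !mulr0.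
Qed.

Lemma sqnorm2_delta i (d : R) : sqnorm2 (d *: delta_mx ord0 i) = d ^+ 2.
Proof.
rewrite /sqnorm2 (bigD1 i) //= big1 => [|j ji]; rewrite !mxE ?eqxx ?(negbTE ji) /=.
  by rewrite mulr1 addr0.
by rewrite mulr0 expr0n.
Qed.

Lemma normr_coord_le_norm2 u i : `|u ord0 i| <= norm2 u.
Proof.
have sq_ge0 j : 0 <= u ord0 j ^+ 2 by exact: sqr_ge0.
rewrite /norm2 -sqrtr_sqr ler_sqrt; last exact: sumr_ge0.
by rewrite /sqnorm2 (bigD1 i) //= lerDl sumr_ge0.
Qed.

Lemma is_derive_line f grad x v (s : R) : has_gradient f grad ->
  is_derive s 1 (fun t => f (x + t *: v)) (dotv (grad (x + s *: v)) v).
Proof.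
move=> /(_ (x + s *: v)) [df dfE].
have shiftE :
    (fun h : R => h^-1 *: (((fun t => f (x + t *: v)) \o shift s) (h *: 1)
                           - f (x + s *: v))) =
    (fun h : R => h^-1 *: ((f \o shift (x + s *: v)) (h *: v) - f (x + s *: v))).
  apply/funext => h /=; congr (_ *: (f _ - _)).
  by rewrite [h *: 1]mulr1 scalerDl addrCA addrA.
apply: DeriveDef; first by rewrite /derivable shiftE; exact: diff_derivable.
by rewrite /derive shiftE -/(derive _ _ _) deriveE.
Qed.

Lemma descent_coord f grad (L : R) x i (d : R) :
  has_gradient f grad -> lipschitz2 grad L ->
  f (x + d *: delta_mx ord0 i) <= f x + grad x ord0 i * d + L / 2 * d ^+ 2.
Proof.
move=> gradf lipf; set v := d *: delta_mx ord0 i.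
pose dphi (t : R) := grad (x + t *: v) ord0 i * d.
have Dphi (t : R) : is_derive t 1 (fun t => f (x + t *: v)) (dphi t).
  by rewrite /dphi -dotv_delta; exact: is_derive_line.
have dphi_le t : 0 <= t <= 1 -> dphi t - dphi 0 <= L * d ^+ 2 * t.
  case/andP=> t_ge0 _; rewrite /dphi scale0r addr0 -mulrBl.
  set a := _ - _; apply: le_trans (ler_norm _) _; rewrite normrM.
  have a_le : `|a| <= L * (t * `|d|).
    have := normr_coord_le_norm2 (grad (x + t *: v) - grad x) i; rewrite !mxE.
    move/le_trans; apply; apply: le_trans (lipf _ _) _.
    by rewrite addrAC subrr add0r /v scalerA /norm2 sqnorm2_delta sqrtr_sqr
      normrM ger0_norm.
  apply: le_trans (ler_wpM2r (normr_ge0 d) a_le) _.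
  rewrite -[d ^+ 2]ger0_norm ?sqr_ge0 // normrX.
  by rewrite [leRHS](_ : _ = L * (t * `|d|) * `|d|) //; ring.
have := descent_segment Dphi dphi_le.
by rewrite scale0r scale1r addr0 /dphi scale0r addr0 mulrAC.
Qed.

Definition set_coord x i (t : R) := x + (t - x ord0 i) *: delta_mx ord0 i.

Lemma set_coordE x i t j : set_coord x i t ord0 j = if j == i then t else x ord0 j.
Proof.
rewrite /set_coord !mxE eqxx /=; case: eqP => [->|_].
  by rewrite mulr1 addrC subrK.
by rewrite mulr0 addr0.
Qed.

Lemma descent_set_coord f grad (L : R) x i t :
  has_gradient f grad -> lipschitz2 grad L ->
  f (set_coord x i t) - f x <=
    grad x ord0 i * (t - x ord0 i) + L / 2 * (t - x ord0 i) ^+ 2.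
Proof. by move=> gradf lipf; rewrite lerBlDl addrA; exact: descent_coord. Qed.

Lemma gmaj_sum f grad (L : R) y x :
  gmaj f grad L y x = f x + \sum_j (grad x ord0 j * (y ord0 j - x ord0 j)
                                    + L / 2 * (y ord0 j - x ord0 j) ^+ 2).
Proof.
rewrite /gmaj /dotv /sqnorm2 mulr_sumr -addrA big_split /=.
by congr (_ + (_ + _)); apply: eq_bigr => j _; rewrite !mxE.
Qed.

Lemma gmaj_id f grad (L : R) x : gmaj f grad L x x = f x.
Proof.
by rewrite gmaj_sum big1 ?addr0 // => j _; rewrite subrr mulr0 expr0n mulr0 addr0.
Qed.

End Coordinates.

Section SeparablePenalty.
Variables (R : realType) (n : nat).
Implicit Types (x : 'rV[R]_n) (i : 'I_n) (f : 'rV[R]_n -> R)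
  (grad : 'rV[R]_n -> 'rV[R]_n) (P : pred R) (c : R -> R).

Definition separable_penalty P c x : \bar R :=
  if [forall j, P (x ord0 j)] then (\sum_j c (x ord0 j))%:E else +oo%E.

Lemma h_bE : @h_b R n = separable_penalty (fun t => (t == 1) || (t == -1)) (fun=> 0).
Proof. by apply/funext => x; rewrite /h_b /separable_penalty big1. Qed.

Lemma h_sE lam rho : @h_s R n lam rho =
  separable_penalty (fun t => - rho <= t <= rho) (fun t => lam * (t != 0)%:R).
Proof.
apply/funext => x; rewrite /h_s /in_box /separable_penalty /l0; case: ifP => // _.
rewrite -mulr_sumr -sum1_card natr_sum big_mkcond /=.
congr (EFin (lam * _)); apply: eq_bigr => j _.
by rewrite inE; case: (x ord0 j != 0).
Qed.

Lemma separable_penalty_dom P c (r : R) x :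
  (r%:E + separable_penalty P c x < +oo)%E -> forall j, P (x ord0 j).
Proof. by rewrite /separable_penalty; case: forallP. Qed.

Lemma sum_set_coord c x i t :
  \sum_j c (set_coord x i t ord0 j) = \sum_j c (x ord0 j) - c (x ord0 i) + c t.
Proof.
rewrite (bigD1 i) //= [in RHS](bigD1 i) //= set_coordE eqxx.
rewrite [c (x ord0 i) + _]addrC addrK [LHS]addrC; congr (_ + _).
by apply: eq_bigr => j /negbTE ji; rewrite set_coordE ji.
Qed.

Lemma block1_stationary_set_coord f (h : 'rV[R]_n -> \bar R) x i t :
  block_stationary 1 f h x -> (Fobj f h x <= Fobj f h (set_coord x i t))%E.
Proof.
move=> /(_ [set i] (cards1 i)) [_ /(_ (exist _ (set_coord x i t) _))]; apply.
by move=> j; rewrite inE set_coordE => /negbTE ->.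
Qed.

Lemma block1_stationary_coord f grad (L : R) P c x i t :
  has_gradient f grad -> lipschitz2 grad L ->
  block_stationary 1 f (separable_penalty P c) x -> P t ->
  c (x ord0 i) <= grad x ord0 i * (t - x ord0 i) + L / 2 * (t - x ord0 i) ^+ 2 + c t.
Proof.
move=> gradf lipf x_stat Pt.
have Px := separable_penalty_dom (x_stat [set i] (cards1 i)).1.
have Px_set j : P (set_coord x i t ord0 j) by rewrite set_coordE; case: ifP.
have := block1_stationary_set_coord i t x_stat.
rewrite /Fobj /separable_penalty; do 2 case: forallP => // _.
rewrite lee_fin sum_set_coord.
have := descent_set_coord x i t gradf lipf.
lra.
Qed.

Lemma block1_L_stationary f grad (L : R) P c x :
  has_gradient f grad -> lipschitz2 grad L ->
  block_stationary 1 f (separable_penalty P c) x ->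
  L_stationary f grad L (separable_penalty P c) x.
Proof.
move=> gradf lipf x_stat.
have Px j : P (x ord0 j) := separable_penalty_dom (x_stat [set j] (cards1 j)).1 j.
split=> [|y] /=; rewrite /separable_penalty gmaj_id; case: forallP => // _.
  exact: ltry.
case: forallP => [Py|_]; last by rewrite leey.
rewrite -!EFinD lee_fin gmaj_sum -addrA lerD2l -big_split /=.
by apply: ler_sum => j _; exact: block1_stationary_coord gradf lipf x_stat (Py j).
Qed.

End SeparablePenalty.

Lemma complete_square_shift (R : numFieldType) (L g x z : R) : L != 0 ->
  g * (z - x) + L / 2 * (z - x) ^+ 2 =
    L / 2 * ((z - (x - L^-1 * g)) ^+ 2 - (x - (x - L^-1 * g)) ^+ 2).
Proof. by move=> L0; field. Qed.

Section Hierarchy.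
Variables (R : realType) (n : nat).
Implicit Types (x : 'rV[R]_n) (f : 'rV[R]_n -> R) (grad : 'rV[R]_n -> 'rV[R]_n)
  (h : 'rV[R]_n -> \bar R).

Lemma L_stationary_h_s_basic f grad (L lam rho : R) x :
  0 < L -> 0 <= lam -> 0 <= rho ->
  L_stationary f grad L (h_s lam rho) x -> basic_stationary HS grad L rho x.
Proof.
move=> L_gt0 lam_ge0 rho_ge0; rewrite h_sE => -[x_dom x_min].
have x_box := separable_penalty_dom x_dom.
split=> [i _|z z_box]; first exact: x_box.
pose y := \row_j (if x ord0 j != 0 then z ord0 j else 0).
have y_box j : - rho <= y ord0 j <= rho.
  rewrite mxE; case: ifP => [xj|_]; first by apply: z_box; rewrite inE xj.
  by rewrite oppr_le0 rho_ge0.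
have y_sparser j : lam * (y ord0 j != 0)%:R <= lam * (x ord0 j != 0)%:R.
  rewrite mxE; case: ifP => _; last by rewrite eqxx.
  by rewrite ler_wpM2l //; case: (_ != 0); rewrite ?ler01.
have := x_min y; rewrite /separable_penalty; do 2 case: forallP => // _.
rewrite -!EFinD lee_fin gmaj_id gmaj_sum -addrA lerD2l => x_le_y.
have sum_le : \sum_j lam * (y ord0 j != 0)%:R <= \sum_j lam * (x ord0 j != 0)%:R.
  by apply: ler_sum => j _; exact: y_sparser.
move: x_le_y; set q := (X in _ <= X + _) => x_le_y.
have q_ge0 : 0 <= q by lra.
rewrite -subr_ge0 -mulrBr -sumrB mulr_sumr (_ : \sum_(i in _) _ = q) //.
rewrite /q big_mkcond; apply: eq_bigr => j _; rewrite inE !mxE.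
case: ifP => [_|/negbFE/eqP->].
  by rewrite complete_square_shift ?lt0r_neq0.
by rewrite subrr mulr0 expr0n mulr0 addr0.
Qed.

Lemma L_stationary_basic f grad (L : R) k (lam rho : R) x :
  0 < L -> 0 <= lam -> 0 <= rho ->
  L_stationary f grad L (hfun k lam rho) x -> basic_stationary k grad L rho x.
Proof.
case: k => /= [_ _ _|]; last exact: L_stationary_h_s_basic.
by rewrite h_bE => -[/separable_penalty_dom x_dom _]; apply/forallP.
Qed.

Lemma exists_superset_card (T : finType) (B : {set T}) m :
  (#|B| <= m <= #|T|)%N -> exists2 B' : {set T}, B \subset B' & #|B'| = m.
Proof.
elim: m => [|m IHm] /andP[Bm mT].
  by exists B => //; apply/eqP; rewrite -leqn0.
move: Bm; rewrite leq_eqVlt ltnS => /orP[/eqP <-|Bm]; first by exists B.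
have [B0 BB0 B0m] := IHm (introT andP (conj Bm (ltnW mT))).
have [j B0j] : exists j, j \notin B0.
  apply/existsP; rewrite -negb_forall; apply: contraTN mT => /forallP B0T.
  rewrite -leqNgt -B0m subset_leq_card //.
  by apply/fintype.subsetP => j _; exact: B0T.
exists (j |: B0); first exact: fintype.subset_trans BB0 (finset.subsetU1 _ _).
by rewrite cardsU1 B0j B0m.
Qed.

Lemma block_stationary_leq f h (k1 k2 : nat) x :
  (k2 <= k1 <= n)%N -> block_stationary k1 f h x -> block_stationary k2 f h x.
Proof.
move=> /andP[k21 k1n] x_stat B B_k2.
have [|B' BB' B'_k1] := @exists_superset_card _ B k1.
  by rewrite B_k2 k21 card_ord.
have [x_dom x_min] := x_stat B' B'_k1; split=> // -[z zB].
apply: (x_min (exist _ z _)) => i iB'; apply: zB.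
by apply: contra iB'; exact: (fintype.subsetP BB').
Qed.

Lemma block_stationary_n f h x :
  block_stationary n f h x <-> is_argmin (Fobj f h) x.
Proof.
split=> [x_stat | [x_dom x_min] B _]; last by split=> // -[z _]; exact: x_min.
have [x_dom x_min] := x_stat [set: 'I_n] (etrans (cardsT _) (card_ord n)).
by split=> // z; apply: (x_min (exist _ z _)) => i; rewrite inE.
Qed.

End Hierarchy.

Theorem proposition1 (R : realType) (n : nat)
    (f : 'rV[R]_n -> R) (grad : 'rV[R]_n -> 'rV[R]_n) (L : R)
    (k : hkind) (lam rho : R) :
  0 < L -> 0 < lam -> 0 < rho ->
  has_gradient f grad -> convex_fun f -> lipschitz2 grad L ->
  let h := hfun k lam rho in
  [/\ (forall x, L_stationary f grad L h x -> basic_stationary k grad L rho x),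
      (forall x, block_stationary 1 f h x -> L_stationary f grad L h x),
      (forall (k1 k2 : nat), (1 <= k2)%N -> (k2 <= k1)%N -> (k1 <= n)%N ->
         forall x, block_stationary k1 f h x -> block_stationary k2 f h x)
    & (forall x, block_stationary n f h x <-> is_argmin (Fobj f h) x)].
Proof.
move=> L_gt0 lam_gt0 rho_gt0 gradf _ lipf h; split.
- by move=> x; apply: L_stationary_basic; rewrite ?ltW.
- move=> x; rewrite /h; case: (k) => /=; [rewrite h_bE | rewrite h_sE];
    exact: block1_L_stationary gradf lipf.
- by move=> k1 k2 _ k21 k1n x; apply: block_stationary_leq; rewrite k21.
- exact: block_stationary_n.
Qed.
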